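(* Let $R>0$, $L>0$, and let $f$ be convex and $L$-Lipschitz on an open convex neighborhood of $B:=\{u\in\mathbb{R}^k:\|u\|_2\le R\}$. Let $h=\frac{1}{2L}$ and let $\{u^{(1)},\dots,u^{(m)}\}\subseteq B$ be an $h$-net of $B$ (every $u\in B$ has some $i$ with $\|u-u^{(i)}\|_2\le h$). For each $i$ pick $g_i\in\partial f(u^{(i)})$ and define $\ell_i(u):=f(u^{(i)})+\langle g_i,u-u^{(i)}\rangle$, and define $$G(u):=1+\log\Big(\sum_{i=1}^m\exp(\ell_i(u))\Big).$$ Then for all $u\in B$, $$f(u)\le G(u)\le f(u)+1+\log m.$$ Moreover, such an $h$-net can be chosen with $m\le(1+4LR)^k$.
   Context: $\partial f(u)$ denotes the subdifferential of the convex function $f$ at $u$. *)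

From HB Require Import structures.
From mathcomp Require Import all_boot all_order all_algebra.
From mathcomp Require Import all_classical all_reals all_analysis.
Set Implicit Arguments. Unset Strict Implicit. Unset Printing Implicit Defensive.
Import Order.TTheory GRing.Theory Num.Theory.
Local Open Scope ring_scope.
Local Open Scope classical_set_scope.

Definition edot {R : realType} {k : nat} (u v : 'rV[R]_k) : R :=
  \sum_(i < k) u ord0 i * v ord0 i.
Definition enorm {R : realType} {k : nat} (u : 'rV[R]_k) : R :=
  Num.sqrt (edot u u).

Definition eball {R : realType} (k : nat) (r : R) : set 'rV[R]_k :=
  [set u | enorm u <= r].

Definition cvx_set_on {R : realType} {k : nat} (U : set 'rV[R]_k) : Prop :=
  forall x y, U x -> U y -> forall t : R, 0 <= t <= 1 ->
    U (t *: x + (1 - t) *: y).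

Definition cvx_fun_on {R : realType} {k : nat} (U : set 'rV[R]_k)
  (f : 'rV[R]_k -> R) : Prop :=
  forall x y, U x -> U y -> forall t : R, 0 <= t <= 1 ->
    f (t *: x + (1 - t) *: y) <= t * f x + (1 - t) * f y.

Definition lip_on {R : realType} {k : nat} (U : set 'rV[R]_k)
  (L : R) (f : 'rV[R]_k -> R) : Prop :=
  forall x y, U x -> U y -> `|f x - f y| <= L * enorm (x - y).

Definition subdiffU {R : realType} {k : nat} (U : set 'rV[R]_k)
  (f : 'rV[R]_k -> R) (u : 'rV[R]_k) : set 'rV[R]_k :=
  [set g | forall v, U v -> f u + edot g (v - u) <= f v].

Definition is_hnet {R : realType} {k m : nat} (B : set 'rV[R]_k) (h : R)
  (p : 'I_m -> 'rV[R]_k) : Prop :=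
  (forall i, B (p i)) /\ (forall u, B u -> exists i, enorm (u - p i) <= h).

Definition smoothG {R : realType} {k m : nat} (f : 'rV[R]_k -> R)
  (p g : 'I_m -> 'rV[R]_k) (u : 'rV[R]_k) : R :=
  1 + ln (\sum_(i < m) expR (f (p i) + edot (g i) (u - p i))).

From HB Require Import structures.
From mathcomp Require Import all_boot all_order all_algebra.
From mathcomp Require Import all_classical all_reals all_analysis.
From mathcomp Require Import ring lra zify.
Set Implicit Arguments. Unset Strict Implicit. Unset Printing Implicit Defensive.
Import Order.TTheory GRing.Theory Num.Theory.
Import numFieldNormedType.Exports.
Local Open Scope ring_scope.
Local Open Scope classical_set_scope.

(* Lower bound: u lies within h = 1/(2L) of some net point u_i, and since f is
   L-Lipschitz and |g_i| <= L, the tangent l_i(u) is within 1 of f(u); upper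
   bound: every l_i minorizes f, so the sum has m terms of size <= exp(f u).
   Net size: a maximal h-separated subset of B is an h-net, and the balls of
   radius h/2 around its points are disjoint and lie in the ball of radius
   R + h/2, giving m <= (1 + 2R/h)^k.  Volumes are replaced by counts of
   integer points in dilated balls: rounding to the lattice costs an additive
   loss in the radius, which disappears after iterating the packing inequality
   and comparing the exponential growth m^J with the polynomial growth of the
   lattice counts. *)

Section Euclidean.
Context {R : realType} {k : nat}.
Implicit Types (u v w : 'rV[R]_k).

Lemma edotC u v : edot u v = edot v u.
Proof. by apply: eq_bigr => i _; rewrite mulrC. Qed.

Lemma edotDl u v w : edot (u + v) w = edot u w + edot v w.
Proof. by rewrite /edot -big_split; apply: eq_bigr => i _; rewrite !mxE mulrDl. Qed.

Lemma edotZl (a : R) u v : edot (a *: u) v = a * edot u v.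
Proof. by rewrite /edot mulr_sumr; apply: eq_bigr => i _; rewrite !mxE mulrA. Qed.

Lemma edotNl u v : edot (- u) v = - edot u v.
Proof. by rewrite -scaleN1r edotZl mulN1r. Qed.

Lemma edotDr u v w : edot w (u + v) = edot w u + edot w v.
Proof. by rewrite !(edotC w) edotDl. Qed.

Lemma edotZr (a : R) u v : edot v (a *: u) = a * edot v u.
Proof. by rewrite !(edotC v) edotZl. Qed.

Lemma edotNr u v : edot v (- u) = - edot v u.
Proof. by rewrite !(edotC v) edotNl. Qed.

Lemma edot_ge0 u : 0 <= edot u u.
Proof. by apply: sumr_ge0 => i _; rewrite -expr2 sqr_ge0. Qed.

Lemma edot_eq0 u : (edot u u == 0) = (u == 0).
Proof.
apply/idP/eqP => [/eqP u0|->]; last by rewrite /edot big1 // => i _; rewrite mxE mul0r.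
apply/rowP => i; rewrite mxE; apply/eqP; rewrite -sqrf_eq0 expr2.
move/eqP: u0; rewrite psumr_eq0 => [/allP/(_ i (mem_index_enum _))|j _] //.
by rewrite -expr2 sqr_ge0.
Qed.

Lemma enorm_ge0 u : 0 <= enorm u.
Proof. exact: sqrtr_ge0. Qed.

Lemma enorm_sqr u : enorm u ^+ 2 = edot u u.
Proof. by rewrite sqr_sqrtr // edot_ge0. Qed.

Lemma enorm0 : enorm (0 : 'rV[R]_k) = 0.
Proof. by apply/eqP; rewrite sqrtr_eq0 le_eqVlt edot_eq0 eqxx. Qed.

Lemma edot_cauchy_schwarz u v : edot u v <= enorm u * enorm v.
Proof.
have [->|v0] := eqVneq v 0.
  by rewrite enorm0 mulr0 /edot big1 // => i _; rewrite mxE mulr0.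
have B0 : 0 < edot v v by rewrite lt_def edot_eq0 v0 edot_ge0.
set A := edot u u; set B := edot v v; set D := edot u v.
have projection_ge0 : 0 <= A - D ^+ 2 / B.
  have -> : A - D ^+ 2 / B = edot (u - (D / B) *: v) (u - (D / B) *: v).
    rewrite !(edotDl, edotDr, edotNl, edotNr, edotZl, edotZr) (edotC v u) -/A -/B -/D.
    by field; rewrite gt_eqF.
  exact: edot_ge0.
have : D ^+ 2 <= (enorm u * enorm v) ^+ 2.
  by rewrite exprMn !enorm_sqr -/A -/B -ler_pdivrMr // -subr_ge0.
rewrite -ler_sqrt ?sqr_ge0 // !sqrtr_sqr [X in _ <= X]ger0_norm ?mulr_ge0 ?enorm_ge0 //.
exact: le_trans (ler_norm D).
Qed.

Lemma enormD u v : enorm (u + v) <= enorm u + enorm v.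
Proof.
rewrite -[X in _ <= X]ger0_norm ?addr_ge0 ?enorm_ge0 // -sqrtr_sqr.
rewrite ler_sqrt ?sqr_ge0 // sqrrD !enorm_sqr edotDl !edotDr (edotC v u).
by have := edot_cauchy_schwarz u v; rewrite mulr2n; lra.
Qed.

Lemma enormZ (a : R) u : enorm (a *: u) = `|a| * enorm u.
Proof. by rewrite /enorm edotZl edotZr mulrA -expr2 sqrtrM ?sqr_ge0 // sqrtr_sqr. Qed.

Lemma enormN u : enorm (- u) = enorm u.
Proof. by rewrite -scaleN1r enormZ normrN1 mul1r. Qed.

Lemma enormBC u v : enorm (u - v) = enorm (v - u).
Proof. by rewrite -enormN opprB. Qed.

Lemma enormB_le u v : enorm (u - v) <= enorm u + enorm v.
Proof. by rewrite -(enormN v) enormD. Qed.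

Lemma coord_le_enorm u i : `|u ord0 i| <= enorm u.
Proof.
rewrite -sqrtr_sqr ler_sqrt ?edot_ge0 // /edot (bigD1 i) //= -expr2 lerDl.
by apply: sumr_ge0 => j _; rewrite -expr2 sqr_ge0.
Qed.

Lemma enorm_le_dim u (c : R) :
  0 <= c -> (forall i, `|u ord0 i| <= c) -> enorm u <= k%:R * c.
Proof.
move=> c0 uc.
rewrite -[X in _ <= X]ger0_norm ?mulr_ge0 // -sqrtr_sqr ler_sqrt ?sqr_ge0 //.
apply: (@le_trans _ _ (\sum_(i < k) c ^+ 2)).
  apply: ler_sum => i _; rewrite -expr2 -real_normK ?num_real //.
  by rewrite lerXn2r ?nnegrE ?normr_ge0 ?uc.
rewrite sumr_const card_ord exprMn -[_ *+ k]mulr_natl.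
apply: ler_wpM2r; first exact: sqr_ge0.
by rewrite -natrX ler_nat; case: (k) => // n; rewrite expnS leq_pmulr.
Qed.

End Euclidean.

Lemma subdiffU_enorm_le (R : realType) (k : nat) (U : set 'rV[R]_k) (L : R)
    (f : 'rV[R]_k -> R) (p g : 'rV[R]_k) :
  0 <= L -> open U -> U p -> lip_on U L f -> subdiffU U f p g -> enorm g <= L.
Proof.
move=> L0 oU Up lipf gp.
have /nbhs_ballP [e e0 pe] : nbhs p U by exact: oU.
set t := e / (2 * (`|g| + 1)).
have t0 : 0 < t by rewrite divr_gt0 // mulr_gt0 // ltr_wpDl.
have Upt : U (p + t *: g).
  apply: pe; rewrite -ball_normE /ball_ /= opprD addNKr normrN normrZ gtr0_norm //.
  rewrite /t -mulrA gtr_pMr // ltr_pdivrMl ?mulr_gt0 ?ltr_wpDl // mulr1.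
  by have := normr_ge0 g; lra.
have step_ge : t * edot g g <= f (p + t *: g) - f p.
  by have := gp _ Upt; rewrite addrAC subrr add0r edotZr; lra.
have step_le : f (p + t *: g) - f p <= t * (L * enorm g).
  apply: le_trans (ler_norm _) _; apply: le_trans (lipf _ _ Upt Up) _.
  by rewrite addrAC subrr add0r enormZ gtr0_norm // mulrCA.
have : enorm g * enorm g <= L * enorm g.
  by rewrite -expr2 enorm_sqr -(ler_pM2l t0); apply: le_trans step_le.
have [->|g0] := eqVneq (enorm g) 0; first by [].
by rewrite ler_pM2r // lt_def g0 enorm_ge0.
Qed.

Lemma expR_le_sum (R : realType) (m : nat) (F : 'I_m -> R) (i : 'I_m) :
  expR (F i) <= \sum_(j < m) expR (F j).
Proof. by rewrite (bigD1 i) //= lerDl sumr_ge0 // => j _; rewrite ltW ?expR_gt0. Qed.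

Lemma ln_sum_expR_ge (R : realType) (m : nat) (F : 'I_m -> R) (i : 'I_m) :
  F i <= ln (\sum_(j < m) expR (F j)).
Proof.
rewrite -[leLHS]expRK ler_ln ?posrE ?expR_gt0 ?expR_le_sum //.
exact: lt_le_trans (expR_gt0 _) (expR_le_sum F i).
Qed.

Lemma ln_sum_expR_le (R : realType) (m : nat) (F : 'I_m -> R) (c : R) :
  (0 < m)%N -> (forall j, F j <= c) -> ln (\sum_(j < m) expR (F j)) <= c + ln m%:R.
Proof.
move=> m0 Fc.
have sum_le : \sum_(j < m) expR (F j) <= expR c * m%:R.
  rewrite mulr_natr -[X in _ *+ X](card_ord m) -sumr_const.
  by apply: ler_sum => j _; rewrite ler_expR.
have sum_gt0 : 0 < \sum_(j < m) expR (F j).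
  exact: lt_le_trans (expR_gt0 _) (expR_le_sum F (Ordinal m0)).
rewrite -[c]expRK -lnM ?posrE ?expR_gt0 ?ltr0n //.
by rewrite ler_ln ?posrE ?mulr_gt0 ?expR_gt0 ?ltr0n.
Qed.

Section SmoothApproximation.
Context {R : realType} {k m : nat}.
Variables (f : 'rV[R]_k -> R) (p g : 'I_m -> 'rV[R]_k).

Lemma smoothG_le (u : 'rV[R]_k) : (0 < m)%N ->
  (forall i, f (p i) + edot (g i) (u - p i) <= f u) -> smoothG f p g u <= f u + 1 + ln m%:R.
Proof.
by move=> m0 lin_le; rewrite /smoothG (addrC (f u)) -addrA lerD2l ln_sum_expR_le.
Qed.

Lemma smoothG_ge (u : 'rV[R]_k) (i : 'I_m) :
  f u - 1 <= f (p i) + edot (g i) (u - p i) -> f u <= smoothG f p g u.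
Proof.
move=> lin_ge; rewrite /smoothG -lerBlDl; apply: le_trans lin_ge _.
apply: ln_sum_expR_ge.
Qed.

End SmoothApproximation.

Lemma tangent_ge_sub1 (R : realType) (k : nat) (L : R) (f : 'rV[R]_k -> R)
    (u v g : 'rV[R]_k) :
  0 < L -> enorm (u - v) <= 1 / (2 * L) -> enorm g <= L ->
  `|f u - f v| <= L * enorm (u - v) -> f u - 1 <= f v + edot g (u - v).
Proof.
move=> L0 uv gL lipf.
have half : L * (1 / (2 * L)) = 1 / 2 by field; rewrite gt_eqF.
have f_near : f u - f v <= 1 / 2.
  by rewrite -half; apply: le_trans (ler_norm _) (le_trans lipf _); rewrite ler_pM2l.
have lin_near : - edot g (u - v) <= 1 / 2.
  rewrite -edotNl -half; apply: le_trans (edot_cauchy_schwarz _ _) _.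
  by rewrite enormN ler_pM ?enorm_ge0.
lra.
Qed.

Lemma leq_size_pairs (S T V : eqType) (s : seq S) (t : seq T) (u : seq V) (F : S -> T -> V) :
  uniq s -> uniq t -> (forall a b, a \in s -> b \in t -> F a b \in u) ->
  (forall a b a' b', a \in s -> b \in t -> a' \in s -> b' \in t ->
     F a b = F a' b' -> a = a' /\ b = b') ->
  (size s * size t <= size u)%N.
Proof.
move=> us ut Fu Finj; rewrite -(size_allpairs pair) -(size_map (fun ab => F ab.1 ab.2)).
apply: uniq_leq_size.
  rewrite map_inj_in_uniq; first by rewrite allpairs_uniq // => -[? ?] [? ?].
  move=> x y /allpairsP [[a b] [/= ha hb ->]] /allpairsP [[a' b'] [/= ha' hb' ->]] /= e.
  by have [-> ->] := Finj _ _ _ _ ha hb ha' hb' e.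
by move=> _ /mapP [_ /allpairsP [[a b] [/= ha hb ->]] ->]; exact: Fu.
Qed.

Section LatticePoints.
Context {R : realType} {k : nat}.

Definition zvec (z : 'rV[int]_k) : 'rV[R]_k := map_mx (fun a : int => a%:~R) z.

Lemma zvecD (z1 z2 : 'rV[int]_k) : zvec (z1 + z2) = zvec z1 + zvec z2.
Proof. by apply/rowP => i; rewrite !mxE intrD. Qed.

Lemma zvec0 : zvec 0 = 0.
Proof. by apply/rowP => i; rewrite !mxE. Qed.

Definition lattice_box (M : nat) : seq 'rV[int]_k :=
  [seq map_mx (fun a : 'I_(2 * M).+1 => a%:Z - M%:Z) v | v <- enum 'rV['I_(2 * M).+1]_k].

Lemma lattice_box_uniq M : uniq (lattice_box M).
Proof.
rewrite map_inj_uniq ?enum_uniq // => v w /rowP vw; apply/rowP => i.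
by have := vw i; rewrite !mxE => /addIr [] /val_inj.
Qed.

Lemma size_lattice_box M : size (lattice_box M) = ((2 * M).+1 ^ k)%N.
Proof. by rewrite size_map -cardE card_mx card_ord mul1n. Qed.

Lemma mem_lattice_box M (z : 'rV[int]_k) :
  (forall i, `|z ord0 i| <= M%:Z) -> z \in lattice_box M.
Proof.
move=> zM; have zM_lt i : (absz (z ord0 i + M%:Z)%R < (2 * M).+1)%N.
  by have := zM i; lia.
apply/mapP; exists (\row_i Ordinal (zM_lt i)); first by rewrite mem_enum.
(* [rowP] indexes the row by [0 : 'I_1]; [lia] needs it spelled [ord0]. *)
by apply/rowP => i; rewrite !mxE /= -[z 0 i]/(z ord0 i); have := zM i; lia.
Qed.

Definition lattice_ball (s : R) : seq 'rV[int]_k :=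
  [seq z <- lattice_box `|Num.ceil s|%N | enorm (zvec z) <= s].

(* [nlattice s] is the discrete stand-in for the volume of the ball of radius s. *)
Definition nlattice (s : R) : nat := size (lattice_ball s).

Lemma lattice_ball_uniq s : uniq (lattice_ball s).
Proof. by rewrite filter_uniq // lattice_box_uniq. Qed.

Lemma mem_lattice_ball s (z : 'rV[int]_k) : (z \in lattice_ball s) = (enorm (zvec z) <= s).
Proof.
rewrite mem_filter andb_idr // => zs; apply: mem_lattice_box => i.
have zi_le : `|(z ord0 i)%:~R| <= s.
  by have := coord_le_enorm (zvec z) i; rewrite mxE => /le_trans; apply.
have ceil_ge0 : 0 <= Num.ceil s.
  by rewrite ceil_ge0 (lt_le_trans _ (le_trans (normr_ge0 _) zi_le)) ?ltrN10.
by rewrite gez0_abs // -(ler_int R) intr_norm (le_trans zi_le) ?ceil_ge.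
Qed.

Lemma le_nlattice s t : s <= t -> (nlattice s <= nlattice t)%N.
Proof.
move=> st; apply: uniq_leq_size (lattice_ball_uniq s) _ => z.
by rewrite !mem_lattice_ball => /le_trans; apply.
Qed.

Lemma nlattice_gt0 s : 0 <= s -> (0 < nlattice s)%N.
Proof.
move=> s0; have : 0 \in lattice_ball s by rewrite mem_lattice_ball zvec0 enorm0.
by rewrite /nlattice; case: (lattice_ball s).
Qed.

Lemma nlattice_le s : 0 <= s -> (nlattice s)%:R <= (2 * s + 3) ^+ k :> R.
Proof.
move=> s0; have ceil_ge0 : 0 <= Num.ceil s by rewrite ceil_ge0 (lt_le_trans _ s0) ?ltrN10.
apply: (@le_trans _ _ ((2 * `|Num.ceil s|%N).+1 ^ k)%:R).
  by rewrite ler_nat -size_lattice_box /nlattice size_filter count_size.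
rewrite natrX lerXn2r ?nnegrE ?ler0n ?addr_ge0 ?mulr_ge0 //.
rewrite -addn1 natrD natrM -[`|_|%N%:R]/((Posz `|_|%N)%:~R) gez0_abs //.
by have := ceilB1_lt s; rewrite intrB; lra.
Qed.

End LatticePoints.
Arguments nlattice {R} k s.

Lemma expr_bounded_le1 (R : realType) (q K : R) :
  0 < q -> (forall J, q ^+ J <= K) -> q <= 1.
Proof.
move=> q0 qK; rewrite leNgt; apply/negP => q1.
have K0 : 0 < K by apply: lt_le_trans (qK 0%N); rewrite expr0.
have lnq0 : 0 < ln q by rewrite ln_gt0.
have lnK_ge0 : 0 <= ln K / ln q.
  by rewrite divr_ge0 ?(ltW lnq0) // ln_ge0 // -(expr0 q) qK.
have := qK (Num.Def.archi_bound (ln K / ln q)).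
rewrite -ler_ln ?posrE ?exprn_gt0 // lnXn // -mulr_natr -ler_pdivlMl // [leRHS]mulrC.
by move=> bound_le; have := lt_le_trans (archi_boundP lnK_ge0) bound_le; rewrite ltxx.
Qed.

Definition separated {R : realType} {k m : nat} (h : R) (p : 'I_m -> 'rV[R]_k) : Prop :=
  forall i j, i != j -> h < enorm (p i - p j).

Section Packing.
Variables (R : realType) (k m : nat) (p : 'I_m -> 'rV[R]_k) (Rad h : R).
Hypotheses (Rad0 : 0 < Rad) (h0 : 0 < h).
Hypotheses (p_ball : forall i, eball Rad (p i)) (p_sep : separated h p).

Let rho := 1 + 2 * Rad / h.

(* Round the points x p_i (x = 2s/h) down to lattice points z_i, at distance
   at most k; the translates by the z_i of the lattice ball of radius s - k are
   disjoint by separation and lie in the lattice ball of radius s rho. *)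
Lemma nlattice_packing s :
  0 < s -> (m * nlattice k (s - k%:R) <= nlattice k (s * rho))%N.
Proof.
move=> s0; set x := 2 * s / h; have x0 : 0 < x by rewrite divr_gt0 ?mulr_gt0.
pose z i := map_mx (fun a : R => Num.floor a) (x *: p i).
pose d i := x *: p i - zvec (z i).
have d_le i : enorm (d i) <= k%:R.
  rewrite -[leRHS]mulr1; apply: enorm_le_dim => // j.
  rewrite !mxE; have /andP [fl_le lt_fl] := floor_itv (x * p i ord0 j).
  by rewrite intrD in lt_fl; rewrite ger0_norm; lra.
have zE i : zvec (z i) = x *: p i - d i by rewrite opprB addrC subrK.
rewrite -[m in (m * _)%N]size_enum_ord.
apply: (@leq_size_pairs _ _ _ _ _ _ (fun i w => z i + w)).
- exact: enum_uniq.
- exact: lattice_ball_uniq.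
- move=> i w _; rewrite !mem_lattice_ball zvecD zE => w_le.
  apply: le_trans (enormD _ _) _; apply: le_trans (lerD (enormB_le _ _) w_le) _.
  have xp_le : x * enorm (p i) <= x * Rad by rewrite ler_pM2l // p_ball.
  have xRad : x * Rad = s * rho - s by rewrite /x /rho; field; rewrite gt_eqF.
  by rewrite enormZ gtr0_norm //; have := d_le i; lra.
- move=> i w j w' _ w_le _ w'_le zw.
  have [eij|ij] := eqVneq i j; first by subst j; split => //; exact: addrI zw.
  exfalso; rewrite !mem_lattice_ball in w_le w'_le.
  have sep_x : x * h < x * enorm (p i - p j) by rewrite ltr_pM2l // p_sep.
  have xh : x * h = 2 * s by rewrite /x; field; rewrite gt_eqF.
  have pij : x *: (p i - p j) = (d i - d j) + (zvec w' - zvec w).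
    have := congr1 (@zvec R k) zw; rewrite !zvecD !zE; clearbody d => e.
    apply/rowP => l; have := congr1 (fun v : 'rV_k => v 0 l) e.
    by rewrite !mxE /= mulrBr; lra.
  have := enormD (d i - d j) (zvec w' - zvec w); rewrite -pij enormZ gtr0_norm //.
  have := enormB_le (d i) (d j); have := enormB_le (zvec w' : 'rV[R]_k) (zvec w).
  by have := d_le i; have := d_le j; lra.
Qed.

Let rho_gt1 : 1 < rho.
Proof. by rewrite ltrDl divr_gt0 ?mulr_gt0. Qed.

Let rho_gt0 : 0 < rho.
Proof. exact: lt_trans ltr01 rho_gt1. Qed.

(* T is the fixed point of s |-> s / rho + k: the rounding losses
   k, k / rho, k / rho^2, ... of the iterated packing inequality add up to T. *)
Let T := k%:R * rho / (rho - 1).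

Let T_ge0 : 0 <= T.
Proof. by rewrite divr_ge0 ?mulr_ge0 ?subr_ge0 ?(ltW rho_gt0) ?(ltW rho_gt1). Qed.

Lemma nlattice_packing_iter J s :
  T < s -> (m ^ J * nlattice k (s - T) <= nlattice k (s * rho ^+ J))%N.
Proof.
have shift : T / rho + k%:R = T.
  by rewrite /T; field; rewrite subr_eq0 !gt_eqF.
elim: J s => [|J IH] s sT; first by rewrite mul1n mulr1 le_nlattice // gerBl.
have s_gt0 : 0 < s - T / rho.
  rewrite subr_gt0 (le_lt_trans _ sT) // ler_pdivrMr //.
  by rewrite ler_peMr // ltW.
have sT' : T < s * rho by rewrite (lt_le_trans sT) // ler_peMr ?ltW ?(le_lt_trans T_ge0).
have := nlattice_packing s_gt0; rewrite -addrA -opprD shift.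
have -> : (s - T / rho) * rho = s * rho - T by field; rewrite gt_eqF.
move=> step; rewrite expnSr -mulnA exprS mulrA.
exact: leq_trans (leq_mul (leqnn _) step) (IH _ sT').
Qed.

Lemma separated_card_le : m%:R <= rho ^+ k.
Proof.
have count_le J : (m ^ J)%:R <= (rho ^+ k) ^+ J * (2 * T + 5) ^+ k.
  have sT : T < T + 1 by rewrite ltrDl.
  have := nlattice_packing_iter J sT; rewrite addrAC subrr add0r.
  move/(leq_trans (leq_pmulr _ (nlattice_gt0 ler01))).
  rewrite -(ler_nat R) => /le_trans; apply.
  have rhoJ : 1 <= rho ^+ J by rewrite exprn_ege1 ?ltW.
  have T1_ge0 : 0 <= (T + 1) * rho ^+ J.
    by rewrite mulr_ge0 ?addr_ge0 ?exprn_ge0 ?(ltW rho_gt0).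
  apply: le_trans (nlattice_le T1_ge0) _.
  rewrite exprAC -exprMn lerXn2r ?nnegrE //; [lra | lra | nra].
have rhok_gt0 : 0 < rho ^+ k by rewrite exprn_gt0.
have [->|m_gt0] := posnP m; first exact: ltW.
rewrite -[leRHS]mul1r -ler_pdivrMr //.
apply: (@expr_bounded_le1 _ _ ((2 * T + 5) ^+ k)); first by rewrite divr_gt0 ?ltr0n.
by move=> J; rewrite expr_div_n ler_pdivrMr ?exprn_gt0 // mulrC -natrX count_le.
Qed.

End Packing.

Section MaximalSeparatedSet.
Variables (R : realType) (k : nat) (Rad h : R).
Hypotheses (Rad0 : 0 < Rad) (h0 : 0 < h).

Lemma separated_extend n (p : 'I_n -> 'rV[R]_k) (u : 'rV[R]_k) :
  (forall i, eball Rad (p i)) -> separated h p ->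
  eball Rad u -> (forall i, h < enorm (u - p i)) ->
  exists q : 'I_n.+1 -> 'rV[R]_k, (forall i, eball Rad (q i)) /\ separated h q.
Proof.
move=> p_ball p_sep u_ball u_far.
exists (fun i => if unlift ord_max i is Some j then p j else u); split.
  by move=> i; case: unliftP.
move=> i j; case: unliftP => [a ->|->]; case: unliftP => [b ->|->] //; last by rewrite eqxx.
- by move=> ab; apply: p_sep; apply: contraNneq ab => ->.
- by move=> _; rewrite enormBC.
Qed.

Lemma exists_separated_hnet : exists (m : nat) (p : 'I_m -> 'rV[R]_k),
  is_hnet (eball Rad) h p /\ m%:R <= (1 + 2 * Rad / h) ^+ k.
Proof.
apply: contrapT => no_net.
have separated_of_size n : exists p : 'I_n -> 'rV[R]_k,
    (forall i, eball Rad (p i)) /\ separated h p.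
  elim: n => [|n [p [p_ball p_sep]]]; first by exists (fun _ => 0); split => -[].
  have [u u_ball u_far] : exists2 u, eball Rad u & forall i, h < enorm (u - p i).
    apply: contrapT => covered; apply: no_net; exists n, p; split.
      split=> // u u_ball; apply: contrapT => u_far; apply: covered; exists u => // i.
      by rewrite ltNge; apply/negP => u_near; apply: u_far; exists i.
    exact: separated_card_le.
  exact: separated_extend u_ball u_far.
pose n := Num.Def.archi_bound ((1 + 2 * Rad / h) ^+ k).
have [p [p_ball p_sep]] := separated_of_size n.
have := separated_card_le Rad0 h0 p_ball p_sep; rewrite leNgt archi_boundP //.
by rewrite exprn_ge0 // addr_ge0 // divr_ge0 ?mulr_ge0 // ltW.
Qed.

End MaximalSeparatedSet.

Theorem lemma3p2 (R : realType) (k : nat) (Rad L : R) (U : set 'rV[R]_k)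
  (f : 'rV[R]_k -> R) :
  0 < Rad -> 0 < L ->
  open U -> cvx_set_on U -> @eball R k Rad `<=` U ->
  cvx_fun_on U f -> lip_on U L f ->
  (forall (m : nat) (p g : 'I_m -> 'rV[R]_k),
     is_hnet (@eball R k Rad) (1 / (2 * L)) p ->
     (forall i, subdiffU U f (p i) (g i)) ->
     forall u, @eball R k Rad u ->
       f u <= smoothG f p g u /\ smoothG f p g u <= f u + 1 + ln m%:R)
  /\
  (exists (m : nat) (p : 'I_m -> 'rV[R]_k),
     is_hnet (@eball R k Rad) (1 / (2 * L)) p /\ m%:R <= (1 + 4 * L * Rad) ^+ k).
Proof.
move=> Rad0 L0 U_open _ BU _ f_lip; split.
  move=> m p g [p_ball p_net] g_sub u u_ball; have [i u_near] := p_net u u_ball.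
  split.
    apply: (smoothG_ge (i := i)); apply: (tangent_ge_sub1 L0 u_near).
      exact: subdiffU_enorm_le (ltW L0) U_open (BU _ (p_ball i)) f_lip (g_sub i).
    exact: f_lip (BU _ u_ball) (BU _ (p_ball i)).
  apply: smoothG_le; first exact: leq_ltn_trans (ltn_ord i).
  by move=> j; apply: g_sub; apply: BU.
have h0 : 0 < 1 / (2 * L) by rewrite divr_gt0 ?mulr_gt0.
have -> : 1 + 4 * L * Rad = 1 + 2 * Rad / (1 / (2 * L)) by field; rewrite gt_eqF.
exact: exists_separated_hnet.
Qed.
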